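(* Let $N,K\in\mathbb{Z}^+$ and $\mu_0\in[\frac1N,1]$ be such that $t=\mu_0N\in[N]$ and $N/t\in\mathbb{Z}^+$. Consider $K$ messages of $L$ bits each and $N$ databases each with storage capacity $\mu_0KL$ bits, and the following scheme: split each message $W_k$ into $N/t$ disjoint equal-size sub-messages $W_{k,1},\ldots,W_{k,N/t}$; split the databases into $N/t$ disjoint groups $\mathcal{N}_1,\ldots,\mathcal{N}_{N/t}$ of size $t$; store $\bigcup_{k\in[K]}W_{k,f}$ at every database of $\mathcal{N}_f$; to retrieve $W_\theta$, for each $f$ the user privately downloads $W_{\theta,f}$ from the $t$ databases of $\mathcal{N}_f$ using a capacity-achieving full-storage PIR scheme. This scheme is a private scheme achieving rate $$R=\left(1+\frac1t+\frac1{t^2}+\cdots+\frac1{t^{K-1}}\right)^{-1}.$$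
   Context: PIR setting: $K$ independent $L$-bit messages stored uncoded among $N$ non-colluding databases; a user wants message $W_\theta$ privately (no single database learns anything about $\theta$ from its query, answer and all stored data) and must decode it with zero error; rate $=L/D$ with $D$ the total number of downloaded bits. A full-storage PIR scheme is a PIR scheme where each of the participating databases stores all (sub-)messages; a capacity-achieving full-storage PIR scheme with $t$ databases and $K$ messages has rate $\left(1+\frac1t+\cdots+\frac1{t^{K-1}}\right)^{-1}$. *)

From HB Require Import structures.
From mathcomp Require Import all_boot all_order all_algebra.
Set Implicit Arguments. Unset Strict Implicit. Unset Printing Implicit Defensive.
Import Order.TTheory GRing.Theory Num.Theory.
Local Open Scope ring_scope.

(* Contents of all K messages: bit (k, b) of message W_k, b ranging over a
   finite type B of bit positions with #|B| = L. *)
Definition msgs (K : nat) (B : finType) := {ffun ('I_K * B)%type -> bool}.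

(* A (one-round) PIR scheme with database index type DB (N = #|DB|),
   K messages and bit positions B (L = #|B|), probabilities in R.
   - the user draws private randomness w : Omega with probability prob w;
   - database n receives query (query theta w n);
   - database n stores (uncoded) the message bits in (stored n);
   - database n answers the bit string (answer n q W), which must be a function
     of q and of its stored bits only (see [PIR_valid]);
   - the user decodes bit b of W_theta as decode theta w A b from all answers A. *)
Record PIR (R : numDomainType) (K : nat) (DB B : finType) := {
  Omega : finType;
  prob : Omega -> R;
  Qry : finType;
  query : 'I_K -> Omega -> DB -> Qry;
  stored : DB -> {set ('I_K * B)%type};
  answer : DB -> Qry -> msgs K B -> seq bool;
  decode : 'I_K -> Omega -> (DB -> seq bool) -> B -> bool
}.
Arguments Omega {R K DB B} p.
Arguments prob {R K DB B} p _.
Arguments Qry {R K DB B} p.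
Arguments query {R K DB B} p _ _ _.
Arguments stored {R K DB B} p _.
Arguments answer {R K DB B} p _ _ _.
Arguments decode {R K DB B} p _ _ _ _.

Section PIRdefs.
Variables (R : realFieldType) (K : nat) (DB B : finType).
Implicit Type S : PIR R K DB B.

Definition PIR_valid S : Prop :=
  [/\ (forall w, 0 <= prob S w),
      \sum_w prob S w = 1,
      (forall n q (W W' : msgs K B),
          (forall x, x \in stored S n -> W x = W' x) ->
          answer S n q W = answer S n q W') &
      (forall theta w (W : msgs K B), 0 < prob S w ->
          forall b, decode S theta w (fun n => answer S n (query S theta w n) W) b
                    = W (theta, b))].

(* privacy: the distribution of the query seen by each single database does
   not depend on theta (answers/storage are deterministic functions of the
   query and of the messages, which are independent of (theta, w)). *)
Definition PIR_private S : Prop :=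
  forall n (theta theta' : 'I_K) (x : Qry S),
    \sum_(w | query S theta w n == x) prob S w
    = \sum_(w | query S theta' w n == x) prob S w.

(* expected total number of downloaded bits when retrieving W_theta
   (expectation over the user's randomness and i.i.d. uniform messages) *)
Definition download S (theta : 'I_K) : R :=
  \sum_w prob S w *
    ((\sum_(W : msgs K B) \sum_n (size (answer S n (query S theta w n) W))%:R)
       / #|{: msgs K B}|%:R).

Definition rate S : R :=
  #|B|%:R / \big[Num.max/0]_(theta < K) download S theta.

Definition full_storage S : Prop := forall n, stored S n = setT.

Definition capacity (t : nat) : R := (\sum_(i < K) (t%:R ^- i))^-1.

Definition cap_achieving_full_storage S : Prop :=
  [/\ PIR_valid S, PIR_private S, full_storage S & rate S = capacity #|DB|].

End PIRdefs.

(* The partition scheme: databases (f, j) with f : 'I_m the group and j : 'I_t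
   the position inside group N_f; message bit (f, b) is bit b of sub-message
   W_{k,f}. *)
Section Partition.
Variables (R : realFieldType) (K m t L' : nat).
Variable S : PIR R K 'I_t 'I_L'.

Definition sub_msgs (f : 'I_m) (W : msgs K ('I_m * 'I_L')%type) : msgs K 'I_L' :=
  [ffun x : ('I_K * 'I_L')%type => W (x.1, (f, x.2))].

Definition partition_scheme : PIR R K ('I_m * 'I_t)%type ('I_m * 'I_L')%type := {|
  Omega := {ffun 'I_m -> Omega S};
  prob := fun w => \prod_f prob S (w f);
  Qry := Qry S;
  query := fun theta w n => query S theta (w n.1) n.2;
  stored := fun n => [set x : 'I_K * ('I_m * 'I_L')%type | x.2.1 == n.1];
  answer := fun n q W => answer S n.2 q (sub_msgs n.1 W);
  decode := fun theta w A b => decode S theta (w b.1) (fun j => A (b.1, j)) b.2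
|}.

End Partition.

From mathcomp Require Import all_boot all_order all_algebra.
Import GRing.Theory Num.Theory.
Local Open Scope ring_scope.

(* Group f runs its own copy of the full-storage scheme S on the
   sub-messages (W_{k,f})_k, the user's randomness being drawn from the
   product distribution.  Marginalising that product shows that each database
   sees its query distributed exactly as in S, which gives privacy, and
   correctness holds group by group.  The sub-messages of a uniformly random
   message are uniform, so each group costs in expectation the download of S:
   message length and download both grow by the factor N/t, and the rate stays
   the capacity for t databases. *)

Section ProductDistribution.
Context {R : comPzRingType} {I J : finType} {p : J -> R}.
Hypothesis p1 : \sum_j p j = 1.

Lemma sum_prod_ffun_eq1 : \sum_(w : {ffun I -> J}) \prod_g p (w g) = 1.
Proof.
by rewrite -(bigA_distr_bigA (fun=> p)) big1.
Qed.

Lemma sum_prod_ffun_marginal (G : J -> R) (f : I) :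
  \sum_(w : {ffun I -> J}) (\prod_g p (w g)) * G (w f) = \sum_j p j * G j.
Proof.
(* Moving the weight G onto coordinate f makes the summand a product over
   the coordinates, so the sum factorises. *)
pose F g j := if g == f then p j * G j else p j.
transitivity (\sum_(w : {ffun I -> J}) \prod_g F g (w g)).
  apply: eq_bigr => w _; rewrite (bigD1 f) //= [RHS](bigD1 f) //= /F eqxx.
  rewrite mulrAC; congr (_ * _); apply: eq_bigr => g /negbTE gf.
  by rewrite gf.
rewrite -bigA_distr_bigA (bigD1 f) //= [X in _ * X]big1 ?mulr1.
  by apply: eq_bigr => j _; rewrite /F eqxx.
by move=> g /negbTE gf; rewrite -p1; apply: eq_bigr => j _; rewrite /F gf.
Qed.

Lemma sum_prod_ffun_marginal_pred (P : pred J) (f : I) :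
  \sum_(w : {ffun I -> J} | P (w f)) \prod_g p (w g) = \sum_(j | P j) p j.
Proof.
have indicator (j : J) x : (if P j then x else 0) = x * (P j)%:R.
  by case: (P j); rewrite ?mulr1 ?mulr0.
rewrite big_mkcond [RHS]big_mkcond /=.
under eq_bigr do rewrite indicator; under [RHS]eq_bigr do rewrite indicator.
exact: sum_prod_ffun_marginal.
Qed.

End ProductDistribution.

(* All fibres of pi are cosets of its kernel, hence have the same size;
   concretely, translating W by a preimage of D shifts pi W by D. *)
Lemma avg_comp_additive_surj {R : numFieldType} {A B : finType}
    (pi : {ffun A -> bool} -> {ffun B -> bool}) (H : {ffun B -> bool} -> R) :
  {morph pi : x y / x + y} -> (forall D, exists E, pi E = D) ->
  (\sum_W H (pi W)) / #|{: {ffun A -> bool}}|%:R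
    = (\sum_D H D) / #|{: {ffun B -> bool}}|%:R.
Proof.
move=> piD pi_surj.
have shift D : \sum_W H (pi W) = \sum_W H (pi W + D).
  have [E <-] := pi_surj D.
  by rewrite (reindex_inj (addIr E)); apply: eq_bigr => W _; rewrite piD.
have cross : (\sum_W H (pi W)) *+ #|{: {ffun B -> bool}}|
           = (\sum_D H D) *+ #|{: {ffun A -> bool}}|.
  rewrite -!sumr_const; under eq_bigr => D _ do rewrite (shift D).
  rewrite exchange_big; apply: eq_big => // W _.
  by rewrite [RHS](reindex_inj (addrI (pi W))); apply: eq_big.
have card_neq0 (T : finType) : #|{: {ffun T -> bool}}|%:R != 0 :> R.
  by rewrite pnatr_eq0 card_ffun card_bool expn_eq0.
apply: (mulIf (card_neq0 A)); apply: (mulIf (card_neq0 B)).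
rewrite (divfK (card_neq0 A)) [RHS]mulrAC (divfK (card_neq0 B)).
by rewrite !mulr_natr.
Qed.

Section Download.
Context {R : realFieldType} {K : nat} {DB B : finType}.

Definition mean_answer_size (S : PIR R K DB B) theta (w : Omega S) n : R :=
  (\sum_(W : msgs K B) (size (answer S n (query S theta w n) W))%:R)
    / #|{: msgs K B}|%:R.

Lemma download_mean_answer_size (S : PIR R K DB B) theta :
  download S theta = \sum_n \sum_w prob S w * mean_answer_size S theta w n.
Proof.
rewrite /download exchange_big; apply: eq_bigr => w _.
by rewrite exchange_big mulr_suml mulr_sumr.
Qed.

End Download.

Section Partition.
Variables (R : realFieldType) (K m t L' : nat) (S : PIR R K 'I_t 'I_L').
Local Notation P := (partition_scheme m S).

Lemma sub_msgsD (f : 'I_m) : {morph @sub_msgs K m L' f : W W' / W + W'}.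
Proof. by move=> W W'; apply/ffunP => x; rewrite !ffunE. Qed.

Lemma sub_msgs_surj (f : 'I_m) (D : msgs K 'I_L') : exists W, sub_msgs f W = D.
Proof.
exists [ffun x : 'I_K * ('I_m * 'I_L') => (x.2.1 == f) && D (x.1, x.2.2)].
by apply/ffunP => x; rewrite !ffunE eqxx -surjective_pairing.
Qed.

Lemma mean_answer_size_partition_scheme theta (w : Omega P) f j :
  mean_answer_size P theta w (f, j) = mean_answer_size S theta (w f) j.
Proof.
rewrite /mean_answer_size /=.
exact: (avg_comp_additive_surj (sub_msgs f)
  (fun D => (size (answer S j (query S theta (w f) j) D))%:R)
  (sub_msgsD f) (sub_msgs_surj f)).
Qed.

Lemma card_stored_partition_scheme n : #|stored P n| = (K * L')%N.
Proof.
have -> : stored P n = (fun y : 'I_K * 'I_L' => (y.1, (n.1, y.2))) @: setT.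
  apply/setP => -[k [g b]]; rewrite inE /=; apply/idP/imsetP.
    by move/eqP=> ->; exists (k, b).
  by case=> -[k' b'] _ [_ -> _].
rewrite card_imset; last by move=> [k b] [k' b'] [-> ->].
by rewrite cardsT card_prod !card_ord.
Qed.

Hypothesis S_valid : PIR_valid S.

Lemma partition_scheme_valid : PIR_valid P.
Proof.
have [p0 p1 _ p_dec] := S_valid.
split=> /=.
- by move=> w; apply: prodr_ge0 => f _; exact: p0.
- exact: sum_prod_ffun_eq1.
- move=> [f j] q W W' eqW /=; congr (answer S j q _).
  by apply/ffunP => x; rewrite !ffunE; apply: eqW; rewrite inE.
- move=> theta w W w_pos [f b] /=.
  have /prodf_neq0 w_neq0 : \prod_g prob S (w g) != 0 := lt0r_neq0 w_pos.
  have wf_pos : 0 < prob S (w f) by rewrite lt0r w_neq0 ?p0.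
  by rewrite (p_dec theta (w f) (sub_msgs f W) wf_pos b) ffunE.
Qed.

Lemma partition_scheme_private : PIR_private S -> PIR_private P.
Proof.
have [_ p1 _ _] := S_valid.
move=> S_private [f j] theta theta' x /=.
rewrite !(sum_prod_ffun_marginal_pred p1 (fun v => query S _ v j == x) f).
exact: S_private.
Qed.

Lemma download_partition_scheme theta :
  download P theta = m%:R * download S theta.
Proof.
have [_ p1 _ _] := S_valid.
rewrite !download_mean_answer_size.
transitivity
  (\sum_(n : 'I_m * 'I_t) \sum_v prob S v * mean_answer_size S theta v n.2).
  apply: eq_bigr => -[f j] _ /=.
  under eq_bigr => w _ do rewrite mean_answer_size_partition_scheme.
  exact: (sum_prod_ffun_marginal p1 (fun v => mean_answer_size S theta v j)).
rewrite -(pair_bigA _ (fun _ j =>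
  \sum_v prob S v * mean_answer_size S theta v j)) /=.
by rewrite sumr_const card_ord mulr_natl.
Qed.

Lemma rate_partition_scheme : (0 < m)%N -> rate P = rate S.
Proof.
move=> m_gt0; have m_neq0 : m%:R != 0 :> R by rewrite pnatr_eq0 -lt0n.
have max_download : \big[Num.max/0]_(theta < K) download P theta
    = m%:R * \big[Num.max/0]_(theta < K) download S theta.
  have mulr_max (x y : R) : m%:R * Num.max x y = Num.max (m%:R * x) (m%:R * y).
    exact: maxr_pMr.
  rewrite (big_morph _ mulr_max (mulr0 _)).
  by apply: eq_bigr => theta _; exact: download_partition_scheme.
rewrite /rate max_download card_prod !card_ord natrM invfM mulrACA.
by rewrite divff // mul1r.
Qed.

End Partition.

Theorem corollary1 (R : realFieldType) (N K L t : nat) (mu0 : R)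
  (S : PIR R K 'I_t 'I_(L %/ (N %/ t))) :
  (0 < N)%N -> (0 < K)%N ->
  N%:R^-1 <= mu0 <= 1 -> mu0 * N%:R = t%:R -> (1 <= t <= N)%N ->
  (t %| N)%N -> (N %/ t %| L)%N ->
  cap_achieving_full_storage S ->
  let P := partition_scheme (N %/ t) S in
  [/\ #|{: ('I_(N %/ t) * 'I_t)%type}| = N
        /\ #|{: ('I_(N %/ t) * 'I_(L %/ (N %/ t)))%type}| = L,
      (forall n, #|stored P n|%:R <= mu0 * (K * L)%:R),
      PIR_valid P,
      PIR_private P &
      rate P = (\sum_(i < K) (t%:R ^- i))^-1].
Proof.
move=> N_gt0 _ _ muN /andP[t_gt0 _] t_dvd_N m_dvd_L.
move=> [S_valid S_private _ S_rate] P.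
have N_eq : (N %/ t * t = N)%N := divnK t_dvd_N.
have L_eq : (L %/ (N %/ t) * (N %/ t) = L)%N := divnK m_dvd_L.
have m_gt0 : (0 < N %/ t)%N by rewrite divn_gt0 // dvdn_leq.
split.
- by rewrite !card_prod !card_ord N_eq mulnC L_eq.
- move=> n; rewrite card_stored_partition_scheme -{2}L_eq mulnA.
  rewrite [(_ * _ * _)%:R]natrM mulrCA.
  have -> : mu0 * (N %/ t)%:R = 1.
    have t_neq0 : t%:R != 0 :> R by rewrite pnatr_eq0 -lt0n.
    apply: (mulIf t_neq0).
    by rewrite mul1r -mulrA -natrM N_eq.
  by rewrite mulr1.
- exact: partition_scheme_valid.
- exact: partition_scheme_private.
- by rewrite rate_partition_scheme // S_rate /capacity card_ord.
Qed.
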